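(* Let $K$ be a field and $P$, $Q$ arbitrary posets. If the $K$-algebras $FI(P)$ and $FI(Q)$ are isomorphic, then the posets $P$ and $Q$ are isomorphic.
   Context: $K$ is a field, $P$ an arbitrary poset. $I(P)$ is the set of functions $\alpha$ assigning to each pair $x\le y$ in $P$ a value $\alpha(x,y)\in K$. An element $\alpha\in I(P)$ is a finitary series if for all $x<y$ in $P$ there are only finitely many pairs $(u,v)$ with $x\le u<v\le y$ and $\alpha(u,v)\neq0$; $FI(P)$ is the set of finitary series. $FI(P)$ is an associative $K$-algebra under pointwise addition and convolution $(\alpha\beta)(x,y)=\sum_{x\le z\le y}\alpha(x,z)\beta(z,y)$. The same definitions apply to $Q$. *)

From HB Require Import structures.
From Stdlib Require Import List ClassicalEpsilon.
From mathcomp Require Import all_boot all_order all_algebra.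
Set Implicit Arguments. Unset Strict Implicit. Unset Printing Implicit Defensive.
Import GRing.Theory.
Local Open Scope ring_scope.

Record poset := Poset {
  pcar :> Type;
  ple : pcar -> pcar -> Prop;
  ple_refl : forall x, ple x x;
  ple_antisym : forall x y, ple x y -> ple y x -> x = y;
  ple_trans : forall x y z, ple x y -> ple y z -> ple x z }.

Definition plt (P : poset) (x y : P) : Prop := ple x y /\ x <> y.

(* Sum of a function with finite support: the common value of
   \sum_(z <- s) f z over duplicate-free lists s containing the support
   (0 by convention if the support is infinite; never used that way). *)
Definition fsum (K : fieldType) (T : Type) (f : T -> K) : K :=
  epsilon (inhabits 0) (fun c => exists s : list T,
    List.NoDup s /\ (forall z, f z <> 0 -> List.In z s) /\ c = \sum_(z <- s) f z).

(* Elements of I(P): functions on pairs, normalised to vanish off x <= y. *)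
Definition in_I (K : fieldType) (P : poset) (a : P -> P -> K) : Prop :=
  forall x y, ~ ple x y -> a x y = 0.

Definition finitary (K : fieldType) (P : poset) (a : P -> P -> K) : Prop :=
  forall x y : P, plt x y ->
    exists l : list (P * P), forall u v : P,
      ple x u -> plt u v -> ple v y -> a u v <> 0 -> List.In (u, v) l.

Definition in_FI (K : fieldType) (P : poset) (a : P -> P -> K) : Prop :=
  in_I a /\ finitary a.

Definition ser_add (K : fieldType) (P : poset) (a b : P -> P -> K) : P -> P -> K :=
  fun x y => a x y + b x y.
Definition ser_scale (K : fieldType) (P : poset) (c : K) (a : P -> P -> K) : P -> P -> K :=
  fun x y => c * a x y.
(* Convolution: (ab)(x,y) = sum_{x<=z<=y} a(x,z) b(z,y); since series vanish
   off the order, the summand is zero unless x <= z <= y. *)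
Definition ser_mul (K : fieldType) (P : poset) (a b : P -> P -> K) : P -> P -> K :=
  fun x y => fsum (fun z : P => a x z * b z y).

Definition FI_isomorphic (K : fieldType) (P Q : poset) : Prop :=
  exists phi : (P -> P -> K) -> (Q -> Q -> K),
    (forall a, in_FI a -> in_FI (phi a)) /\
    (forall a b, in_FI a -> in_FI b -> phi a = phi b -> a = b) /\
    (forall g, in_FI g -> exists2 a, in_FI a & phi a = g) /\
    (forall a b, in_FI a -> in_FI b -> phi (ser_add a b) = ser_add (phi a) (phi b)) /\
    (forall c a, in_FI a -> phi (ser_scale c a) = ser_scale c (phi a)) /\
    (forall a b, in_FI a -> in_FI b -> phi (ser_mul a b) = ser_mul (phi a) (phi b)).

Definition poset_isomorphic (P Q : poset) : Prop :=
  exists f : P -> Q, bijective f /\ forall x y : P, ple x y <-> ple (f x) (f y).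

(* Write e_p for the matrix unit delta_{p,p} and delta_{p,q} for the series
   that is 1 at (p, q) and 0 elsewhere.  Only the multiplicative structure of
   FI(P) is used.  The key computation is the sandwich formula
   e_p a e_q = a(p, q) delta_{p,q}.  Call f "anchored at p" when f e_p f = f.
   We show, for series of FI(R):
   - a nonzero idempotent has a diagonal entry equal to 1 (a descent on the
     finitely many nonzero entries of an interval, using finitarity);
   - an anchored series vanishes on the diagonal away from its anchor, so a
     nonzero idempotent anchored at p satisfies f(p, p) = 1;
   - if f is anchored at p, g anchored at q and f m g <> 0, then p <= q.
   Given a multiplicative bijection phi : FI(P) -> FI(Q) with inverse psi, we
   relate x in P and y in Q when phi(e_x)(y, y) = 1 and psi(e_y)(x, x) = 1.
   This relation is symmetric in (phi, psi), total, functional and monotone;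
   applying these facts to (phi, psi) and to (psi, phi) yields an order
   isomorphism P -> Q. *)
From Stdlib Require Import List Permutation ClassicalEpsilon Classical FunctionalExtensionality.
From mathcomp Require Import all_boot all_order all_algebra.
Set Implicit Arguments. Unset Strict Implicit. Unset Printing Implicit Defensive.
Import GRing.Theory.
Local Open Scope ring_scope.

Lemma sum_filter_nz (K : fieldType) (T : Type) (f : T -> K) (s : list T) :
  \sum_(z <- s) f z = \sum_(z <- List.filter (fun z => f z != 0) s) f z.
Proof.
elim: s => [|a s IH] //=; rewrite big_cons IH.
by case: eqP => [->|_] /=; rewrite ?add0r ?big_cons.
Qed.

Lemma sum_perm (K : fieldType) (T : Type) (f : T -> K) (s t : list T) :
  Permutation s t -> \sum_(z <- s) f z = \sum_(z <- t) f z.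
Proof.
elim => [//|x l l' _ IH|x y l|l l' l'' _ IH1 _ IH2].
- by rewrite !big_cons IH.
- by rewrite !big_cons addrCA.
- by rewrite IH1 IH2.
Qed.

Lemma fsum_eval (K : fieldType) (T : Type) (f : T -> K) (s : list T) :
  NoDup s -> (forall z, f z <> 0 -> In z s) -> fsum f = \sum_(z <- s) f z.
Proof.
move=> s_uniq s_supp; rewrite /fsum.
set Pr := (fun c => _).
have ex : exists c, Pr c by exists (\sum_(z <- s) f z); exists s.
have [t [t_uniq [t_supp ->]]] := epsilon_spec (inhabits 0) Pr ex.
rewrite (sum_filter_nz f s) (sum_filter_nz f t); apply: sum_perm.
apply: NoDup_Permutation; try by apply: NoDup_filter.
move=> z; rewrite !filter_In; split => -[_ fz]; split => //.
  by apply: s_supp; apply/eqP.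
by apply: t_supp; apply/eqP.
Qed.

Lemma fsum0 (K : fieldType) (T : Type) (f : T -> K) :
  (forall z, f z = 0) -> fsum f = 0.
Proof. by move=> f0; rewrite (@fsum_eval _ _ f [::]) ?big_nil //; constructor. Qed.

Lemma fsum_nz (K : fieldType) (T : Type) (f : T -> K) :
  fsum f <> 0 -> exists z, f z <> 0.
Proof.
move=> sum_nz; apply: NNPP => no_z; apply: sum_nz; apply: fsum0 => z.
by apply: NNPP => fz; apply: no_z; exists z.
Qed.

Lemma fsum1 (K : fieldType) (T : Type) (f : T -> K) (p : T) :
  (forall z, f z <> 0 -> z = p) -> fsum f = f p.
Proof.
move=> supp; rewrite (@fsum_eval _ _ f [:: p]) ?big_cons ?big_nil ?addr0 //.
  by constructor; [by [] | constructor].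
by move=> z /supp ->; left.
Qed.

Lemma mulf_nz (K : fieldType) (a b : K) : a * b <> 0 -> a <> 0 /\ b <> 0.
Proof. by move=> ab_nz; split => a0; apply: ab_nz; rewrite a0 ?mul0r ?mulr0. Qed.

Definition dedup (T : Type) (s : list T) : list T :=
  nodup (fun x y : T => excluded_middle_informative (x = y)) s.

Definition prop_bool (A : Prop) : bool :=
  if excluded_middle_informative A then true else false.

Lemma prop_boolP (A : Prop) : prop_bool A <-> A.
Proof. by rewrite /prop_bool; case: excluded_middle_informative. Qed.

Lemma count_lt (T : Type) (a b : pred T) (s : list T) (x0 : T) :
  (forall x, a x -> b x) -> In x0 s -> b x0 -> ~~ a x0 -> (count a s < count b s)%N.
Proof.
move=> ab; have count_le t : (count a t <= count b t)%N by apply: sub_count => x /ab.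
elim: s => [|y s IH] //= [->|x0s] bx0 ax0.
  by rewrite bx0 (negbTE ax0) add0n add1n ltnS.
rewrite -addnS; apply: leq_add; last exact: IH.
by case ay: (a y) => //; rewrite (ab _ ay).
Qed.

Section IncidenceAlgebra.

Variable K : fieldType.
Local Notation series R := (R -> R -> K).
Local Notation zero := (fun _ _ => 0 : K).

Lemma ser_ext (R : poset) (a b : series R) :
  (forall u v, a u v = b u v) -> a = b.
Proof.
by move=> ab; apply: functional_extensionality => u; apply: functional_extensionality.
Qed.

Lemma nz_le (R : poset) (a : series R) u v : in_I a -> a u v <> 0 -> ple u v.
Proof. by move=> aI auv; apply: NNPP => Nuv; apply: auv; apply: aI. Qed.

Lemma mul_nz (R : poset) (a b : series R) u v :
  ser_mul a b u v <> 0 -> exists z, a u z <> 0 /\ b z v <> 0.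
Proof. by move=> /fsum_nz [z /mulf_nz]; exists z. Qed.

Lemma mul_in_I (R : poset) (a b : series R) :
  in_I a -> in_I b -> in_I (ser_mul a b).
Proof.
move=> aI bI u v Nuv; apply: NNPP => /mul_nz [z [auz bzv]]; apply: Nuv.
exact: ple_trans (nz_le aI auz) (nz_le bI bzv).
Qed.

(* FI(R) is closed under convolution: a nonzero term (u, z)(z, v) of the product
   on a proper interval comes from a nonzero entry of a or b on a proper
   subinterval, or both. *)
Lemma mul_FI (R : poset) (a b : series R) :
  in_FI a -> in_FI b -> in_FI (ser_mul a b).
Proof.
move=> [aI aF] [bI bF]; split; first exact: mul_in_I.
move=> x y xy; have [La La_supp] := aF x y xy; have [Lb Lb_supp] := bF x y xy.
exists (La ++ Lb ++ List.map (fun pq => (pq.1.1, pq.2.2)) (list_prod La Lb)).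
move=> u v xu uv vy /mul_nz [z [auz bzv]].
have uz := nz_le aI auz; have zv := nz_le bI bzv.
apply/in_or_app; case: (classic (u = z)) => [Euz|Nuz].
  by subst z; right; apply/in_or_app; left; exact: Lb_supp.
case: (classic (z = v)) => [Ezv|Nzv]; first by subst z; left; exact: La_supp.
right; apply/in_or_app; right.
apply: (in_map (fun pq : (R * R) * (R * R) => (pq.1.1, pq.2.2)) _ ((u, z), (z, v))).
apply/in_prod.
  exact: La_supp xu (conj uz Nuz) (ple_trans zv vy) auz.
exact: Lb_supp (ple_trans xu uz) (conj zv Nzv) vy bzv.
Qed.

(* For x <= y, one finite list contains the supports of z |-> a x z below y
   and of w |-> c w y above x; this lets both sides of associativity be
   computed as double sums over the same list. *)
Lemma interval_support (R : poset) (a c : series R) (x y : R) :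
  in_FI a -> in_FI c -> ple x y -> exists S : list R, NoDup S /\
   (forall z, ple z y -> a x z <> 0 -> In z S) /\
   (forall w, ple x w -> c w y <> 0 -> In w S).
Proof.
move=> [aI aF] [cI cF] xy; case: (classic (x = y)) => [<-|Nxy].
  exists [:: x]; split; first by constructor; [by []|constructor].
  split => z zx zfz; left.
    exact: ple_antisym (nz_le aI zfz) zx.
  exact: ple_antisym zx (nz_le cI zfz).
have [La La_supp] := aF x y (conj xy Nxy); have [Lc Lc_supp] := cF x y (conj xy Nxy).
exists (dedup (x :: y :: List.map snd La ++ List.map fst Lc)).
split; first exact: NoDup_nodup.
split => [z zy axz | w xw cwy]; apply/nodup_In.
  case: (classic (x = z)) => [->|Nxz]; first by left.
  right; right; apply/in_or_app; left; apply: (in_map snd La (x, z)).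
  by apply: La_supp => //; [exact: ple_refl | split => //; exact: nz_le aI axz].
case: (classic (w = y)) => [->|Nwy]; first by right; left.
right; right; apply/in_or_app; right; apply: (in_map fst Lc (w, y)).
by apply: Lc_supp => //; [split => //; exact: nz_le cI cwy | exact: ple_refl].
Qed.

Lemma mul_assoc (R : poset) (a b c : series R) :
  in_FI a -> in_FI b -> in_FI c ->
  ser_mul (ser_mul a b) c = ser_mul a (ser_mul b c).
Proof.
move=> aFI bFI cFI; have [aI _] := aFI; have [bI _] := bFI; have [cI _] := cFI.
have abI := mul_in_I aI bI; have bcI := mul_in_I bI cI.
apply: ser_ext => x y; case: (classic (ple x y)) => [xy|Nxy]; last first.
  by rewrite (mul_in_I abI cI) // (mul_in_I aI bcI).
have [S [S_uniq [S_a S_c]]] := interval_support aFI cFI xy.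
rewrite /ser_mul (@fsum_eval _ _ _ S) //; last first.
  by move=> w /mulf_nz [abxw cwy]; apply: S_c => //; exact: nz_le abI abxw.
rewrite [RHS](@fsum_eval _ _ _ S) //; last first.
  by move=> z /mulf_nz [axz bczy]; apply: S_a => //; exact: nz_le bcI bczy.
transitivity (\sum_(w <- S) (\sum_(z <- S) a x z * b z w) * c w y).
  apply: eq_bigr => w _; case: (classic (ple w y)) => [wy|Nwy].
    congr (_ * _); apply: fsum_eval => // z /mulf_nz [axz bzw].
    by apply: S_a => //; exact: ple_trans (nz_le bI bzw) wy.
  by rewrite (cI w y Nwy) !mulr0.
transitivity (\sum_(z <- S) a x z * (\sum_(w <- S) b z w * c w y)); last first.
  apply: eq_bigr => z _; case: (classic (ple x z)) => [xz|Nxz].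
    congr (_ * _); symmetry; apply: fsum_eval => // w /mulf_nz [bzw cwy].
    by apply: S_c => //; exact: ple_trans xz (nz_le bI bzw).
  by rewrite (aI x z Nxz) !mul0r.
under eq_bigr do rewrite big_distrl.
rewrite exchange_big; apply: eq_bigr => z _.
by rewrite big_distrr; apply: eq_bigr => w _ /=; rewrite mulrA.
Qed.

Lemma zero_FI (R : poset) : in_FI (zero : series R).
Proof. by split => // x y _; exists [::]. Qed.

Lemma mul0s (R : poset) (a : series R) : ser_mul zero a = zero.
Proof. by apply: ser_ext => u v; apply: fsum0 => z; rewrite mul0r. Qed.

Lemma muls0 (R : poset) (a : series R) : ser_mul a zero = zero.
Proof. by apply: ser_ext => u v; apply: fsum0 => z; rewrite mulr0. Qed.

Lemma diag_mul (R : poset) (a b : series R) u :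
  in_I a -> in_I b -> ser_mul a b u u = a u u * b u u.
Proof.
move=> aI bI; rewrite /ser_mul (@fsum1 _ _ _ u) // => z /mulf_nz [auz bzu].
exact: ple_antisym (nz_le bI bzu) (nz_le aI auz).
Qed.

Definition delta (R : poset) (p q : R) : series R :=
  fun u v => if excluded_middle_informative (u = p /\ v = q) then 1 else 0.

Lemma delta_pq (R : poset) (p q : R) : delta p q p q = 1.
Proof. by rewrite /delta; case: excluded_middle_informative => // -[]. Qed.

Lemma delta_off (R : poset) (p q u v : R) : ~ (u = p /\ v = q) -> delta p q u v = 0.
Proof. by rewrite /delta; case: excluded_middle_informative. Qed.

Lemma delta_nz (R : poset) (p q u v : R) : delta p q u v <> 0 -> u = p /\ v = q.
Proof. by move=> duv; apply: NNPP => off; apply: duv; apply: delta_off. Qed.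

Lemma delta_FI (R : poset) (p q : R) : ple p q -> in_FI (delta p q).
Proof.
move=> pq; split.
  by move=> u v Nuv; apply: delta_off => -[Eu Ev]; apply: Nuv; rewrite Eu Ev.
by move=> x y _; exists [:: (p, q)] => u v _ _ _ /delta_nz [Eu Ev]; left; rewrite Eu Ev.
Qed.

Lemma delta_neq0 (R : poset) (p q : R) : delta p q <> zero.
Proof. by move=> d0; have := delta_pq p q; rewrite d0 => /eqP; rewrite eq_sym oner_eq0. Qed.

Lemma mul_delta_l (R : poset) (p : R) (a : series R) u v :
  ser_mul (delta p p) a u v = delta p p u p * a p v.
Proof. by rewrite /ser_mul (@fsum1 _ _ _ p) // => z /mulf_nz [/delta_nz [_ ->]]. Qed.

Lemma mul_delta_r (R : poset) (q : R) (a : series R) u v :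
  ser_mul a (delta q q) u v = a u q * delta q q q v.
Proof. by rewrite /ser_mul (@fsum1 _ _ _ q) // => z /mulf_nz [_ /delta_nz [-> _]]. Qed.

Lemma sandwich (R : poset) (p q : R) (a : series R) :
  ser_mul (ser_mul (delta p p) a) (delta q q) = ser_scale (a p q) (delta p q).
Proof.
apply: ser_ext => u v; rewrite mul_delta_r mul_delta_l /ser_scale.
case: (classic (u = p)) => [->|Nu]; last first.
  by rewrite (@delta_off _ p p u p) ?(@delta_off _ p q u v) ?mul0r ?mulr0 // => -[].
case: (classic (v = q)) => [->|Nv]; last first.
  by rewrite (@delta_off _ q q q v) ?(@delta_off _ p q p v) ?mulr0 // => -[].
by rewrite !delta_pq mul1r mulr1.
Qed.

Lemma sandwich_nz (R : poset) (p q : R) :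
  ser_mul (ser_mul (delta p p) (delta p q)) (delta q q) <> zero.
Proof.
by rewrite sandwich delta_pq => s0; apply: (@delta_neq0 _ p q); rewrite -s0;
  apply: ser_ext => u v; rewrite /ser_scale mul1r.
Qed.

Lemma sandwich_diag_one (R : poset) (p : R) (a : series R) :
  a p p = 1 -> ser_mul (ser_mul (delta p p) a) (delta p p) = delta p p.
Proof. by move=> app; rewrite sandwich app; apply: ser_ext => u v; rewrite /ser_scale mul1r. Qed.

Lemma delta_idem (R : poset) (p : R) : ser_mul (delta p p) (delta p p) = delta p p.
Proof.
apply: ser_ext => u v; rewrite mul_delta_l.
case: (classic (u = p)) => [->|Nu]; first by rewrite delta_pq mul1r.
by rewrite !(@delta_off _ p p u) ?mul0r // => -[].
Qed.

(* A nonzero entry f(u, v)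
   with u < v splits, by f = f f, into nonzero entries f(u, w) f(w, v) with
   u < w < v; the finitely many nonzero pairs of an interval [y, z] bound the
   length of such a descent. *)
Lemma idem_diag0 (R : poset) (f : series R) :
  in_FI f -> ser_mul f f = f -> (forall u, f u u = 0) -> f = zero.
Proof.
move=> [fI fF] ff diag0; apply: ser_ext => y z; apply: NNPP => fyz.
have yz := nz_le fI fyz.
have Nyz : y <> z by move=> Eyz; apply: fyz; rewrite Eyz diag0.
have [L L_supp] := fF y z (conj yz Nyz).
(* pairs_in u v counts the pairs of L inside [u, v]; it drops along the descent. *)
pose pairs_in (u v : R) := count (fun p : R * R => prop_bool (ple u p.1 /\ ple p.2 v)) L.
suff descent n u v : ple y u -> ple v z -> f u v <> 0 -> (pairs_in u v < n)%N -> False.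
  exact: (descent (pairs_in y z).+1 y z (ple_refl y) (ple_refl z) fyz).
elim: n u v => [//|n IH] u v yu vz fuv; rewrite ltnS => small.
have [w [fuw fwv]] : exists w, f u w <> 0 /\ f w v <> 0 by apply: mul_nz; rewrite ff.
have uw := nz_le fI fuw; have wv := nz_le fI fwv.
have Nuw : u <> w by move=> Euw; apply: fuw; rewrite Euw diag0.
have Nwv : w <> v by move=> Ewv; apply: fwv; rewrite Ewv diag0.
have Nuv : u <> v by move=> Euv; apply: Nuw; apply: (ple_antisym uw); rewrite Euv.
apply: (IH u w yu (ple_trans wv vz) fuw); apply: leq_trans small.
apply: (count_lt (x0 := (u, v))).
- by move=> p /prop_boolP [up pw]; apply/prop_boolP; split => //; exact: ple_trans pw wv.
- by apply: L_supp => //; split; [exact: ple_trans uw wv | exact: Nuv].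
- by apply/prop_boolP; split; exact: ple_refl.
- by apply/negP => /prop_boolP [_ /= vw]; apply: Nwv; exact: ple_antisym.
Qed.

Lemma idem_diag_one (R : poset) (f : series R) :
  in_FI f -> ser_mul f f = f -> f <> zero -> exists u, f u u = 1.
Proof.
move=> fFI ff f_nz; have fI := proj1 fFI.
have [u fu] : exists u, f u u <> 0.
  apply: NNPP => diag0; apply/f_nz/idem_diag0 => // u.
  by apply: NNPP => fu; apply: diag0; exists u.
exists u; apply: (mulfI (x := f u u)); first exact/eqP.
by rewrite mulr1 -(diag_mul u fI fI) ff.
Qed.

Definition anchored (R : poset) (f : series R) (p : R) : Prop :=
  ser_mul (ser_mul f (delta p p)) f = f.

Lemma anchored_diag (R : poset) (f : series R) (p v : R) :
  in_I f -> anchored f p -> v <> p -> f v v = 0.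
Proof.
move=> fI anch Nvp; have dI := proj1 (delta_FI (ple_refl p)).
rewrite -anch diag_mul //; last exact: mul_in_I.
by rewrite mul_delta_r (@delta_off _ p p p v) ?mulr0 ?mul0r // => -[_ Evp]; apply: Nvp.
Qed.

Lemma anchored_idem_one (R : poset) (f : series R) (p : R) :
  in_FI f -> ser_mul f f = f -> f <> zero -> anchored f p -> f p p = 1.
Proof.
move=> fFI ff f_nz anch; have [u fu] := idem_diag_one fFI ff f_nz.
case: (classic (u = p)) => [<- //|Nup].
by move: fu; rewrite (anchored_diag (proj1 fFI) anch Nup) => /eqP; rewrite eq_sym oner_eq0.
Qed.

(* Anchors are ordered by nonvanishing products: if f is anchored at p, g at q
   and f m g <> 0, then p <= q, since f m g = f (e_p (f m g) e_q) g and
   e_p (f m g) e_q = (f m g)(p, q) delta_{p,q}. *)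
Lemma anchored_le (R : poset) (p q : R) (f g m : series R) :
  in_FI f -> in_FI g -> in_FI m -> anchored f p -> anchored g q ->
  ser_mul (ser_mul f m) g <> zero -> ple p q.
Proof.
move=> fFI gFI mFI fp gq fmg_nz; apply: NNPP => Npq; apply: fmg_nz.
have dFI r : in_FI (delta r r) by exact: delta_FI (ple_refl r).
have fmgFI : in_FI (ser_mul (ser_mul f m) g) by do 2 apply: mul_FI => //.
have -> : ser_mul (ser_mul f m) g = ser_mul f (ser_mul (ser_mul (ser_mul
    (delta p p) (ser_mul (ser_mul f m) g)) (delta q q)) g).
  rewrite -{1}fp -{1}gq !mul_assoc //; repeat apply: mul_FI => //.
rewrite sandwich (proj1 fmgFI p q Npq).
have -> : ser_scale 0 (delta p q) = zero by apply: ser_ext => u v; rewrite /ser_scale mul0r.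
by rewrite mul0s muls0.
Qed.

End IncidenceAlgebra.

Record FI_iso_pair (K : fieldType) (P Q : poset)
    (phi : (P -> P -> K) -> Q -> Q -> K) (psi : (Q -> Q -> K) -> P -> P -> K) : Prop := {
  iso_FI : forall a, in_FI a -> in_FI (phi a);
  iso_inv_FI : forall b, in_FI b -> in_FI (psi b);
  iso_K : forall a, in_FI a -> psi (phi a) = a;
  iso_inv_K : forall b, in_FI b -> phi (psi b) = b;
  iso_mul : forall a b, in_FI a -> in_FI b -> phi (ser_mul a b) = ser_mul (phi a) (phi b) }.

Section IsoPair.

Variables (K : fieldType) (P Q : poset).
Variables (phi : (P -> P -> K) -> Q -> Q -> K) (psi : (Q -> Q -> K) -> P -> P -> K).
Hypothesis iso : FI_iso_pair phi psi.

Lemma iso_pair_sym : FI_iso_pair psi phi.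
Proof.
case: iso => phiFI psiFI phiK psiK phi_mul; split => // a b aFI bFI.
have [psiaFI psibFI] := (psiFI a aFI, psiFI b bFI).
by rewrite -{1}(psiK a) // -{1}(psiK b) // -phi_mul // phiK //; exact: mul_FI.
Qed.

(* phi maps nonzero series to nonzero series: phi 0 = phi (0 psi(0)) = phi(0) 0. *)
Lemma iso_nz (a : P -> P -> K) : in_FI a -> a <> (fun _ _ => 0) -> phi a <> (fun _ _ => 0).
Proof.
case: iso => phiFI psiFI phiK psiK phi_mul aFI a_nz phia0; apply: a_nz.
have [zP zQ] := (zero_FI K P, zero_FI K Q).
have phi0 : phi (fun _ _ => 0) = (fun _ _ => 0).
  by rewrite -(mul0s (psi (fun _ _ => 0))) phi_mul ?psiK ?muls0 //; exact: psiFI.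
by rewrite -(phiK a) // phia0 -phi0 phiK.
Qed.

Lemma iso_unit_idem (x : P) :
  in_FI (phi (delta K x x)) /\ ser_mul (phi (delta K x x)) (phi (delta K x x)) = phi (delta K x x)
  /\ phi (delta K x x) <> (fun _ _ => 0).
Proof.
have xFI := delta_FI K (ple_refl x).
split; first exact: iso_FI iso _ xFI.
by split; [rewrite -(iso_mul iso) // delta_idem | apply: iso_nz => //; exact: delta_neq0].
Qed.

(* If phi(e_x)(y, y) = 1 then psi(e_y) is anchored at x: apply psi to
   e_y phi(e_x) e_y = e_y. *)
Lemma diag_one_anchored (x : P) (y : Q) :
  phi (delta K x x) y y = 1 -> anchored (psi (delta K y y)) x.
Proof.
move=> fxy; have [phiFI psiFI phiK _ _] := iso; have psi_mul := iso_mul iso_pair_sym.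
have xFI := delta_FI K (ple_refl x); have yFI := delta_FI K (ple_refl y).
have fFI := phiFI _ xFI; have yfFI := mul_FI yFI fFI.
have := congr1 psi (sandwich_diag_one fxy).
by rewrite !psi_mul // phiK.
Qed.

End IsoPair.

Section Correspondence.

Variables (K : fieldType) (P Q : poset).
Variables (phi : (P -> P -> K) -> Q -> Q -> K) (psi : (Q -> Q -> K) -> P -> P -> K).
Hypothesis iso : FI_iso_pair phi psi.

Definition corr (x : P) (y : Q) : Prop :=
  phi (delta K x x) y y = 1 /\ psi (delta K y y) x x = 1.

(* Every x has a correspondent: phi(e_x) has a diagonal entry 1 at some y, and
   psi(e_y) is then a nonzero idempotent anchored at x. *)
Lemma corr_exists (x : P) : exists y, corr x y.
Proof.
have [fFI [ff f_nz]] := iso_unit_idem iso x.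
have [y fy] := idem_diag_one fFI ff f_nz.
have [gFI [gg g_nz]] := iso_unit_idem (iso_pair_sym iso) y.
exists y; split => //.
by apply: anchored_idem_one => //; exact: (diag_one_anchored iso fy).
Qed.

(* The correspondent is unique, since phi(e_x) is anchored at it. *)
Lemma corr_unique (x : P) (y y' : Q) : corr x y -> corr x y' -> y = y'.
Proof.
move=> [_ gx] [fy' _]; apply: NNPP => Nyy'.
have fI := proj1 (proj1 (iso_unit_idem iso x)).
have anch := diag_one_anchored (iso_pair_sym iso) gx.
by move: fy'; rewrite (anchored_diag fI anch (nesym Nyy')) => /eqP; rewrite eq_sym oner_eq0.
Qed.

(* The correspondence is monotone: for x <= x', the product
   phi(e_x) phi(delta_{x,x'}) phi(e_x') = phi(delta_{x,x'}) is nonzero. *)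
Lemma corr_le (x x' : P) (y y' : Q) :
  corr x y -> corr x' y' -> ple x x' -> ple y y'.
Proof.
move=> [_ gx] [_ gx'] xx'.
have [phiFI _ _ _ phi_mul] := iso.
have dFI := delta_FI K xx'.
have xFI := delta_FI K (ple_refl x); have x'FI := delta_FI K (ple_refl x').
apply: (anchored_le (m := phi (delta K x x')) (phiFI _ xFI) (phiFI _ x'FI) (phiFI _ dFI));
  try exact: diag_one_anchored (iso_pair_sym iso) _ _ _.
rewrite -!phi_mul //; last exact: mul_FI.
by apply: (iso_nz iso); [do 2 apply: mul_FI => // | exact: sandwich_nz].
Qed.

End Correspondence.

Lemma FI_iso_pair_of (K : fieldType) (P Q : poset) : FI_isomorphic K P Q ->
  exists phi psi, @FI_iso_pair K P Q phi psi.
Proof.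
move=> [phi [phiFI [phi_inj [phi_surj [_ [_ phi_mul]]]]]].
have pre b : exists a, in_FI b -> in_FI a /\ phi a = b.
  case: (classic (in_FI b)) => [/phi_surj [a aFI <-]|NbFI]; first by exists a.
  by exists (fun _ _ => 0).
pose psi b := proj1_sig (constructive_indefinite_description _ (pre b)).
have psiP b : in_FI b -> in_FI (psi b) /\ phi (psi b) = b.
  exact: proj2_sig (constructive_indefinite_description _ (pre b)).
exists phi, psi; split => // [b /psiP [] //|a aFI|b /psiP [] //].
by have [psiFI psiK] := psiP _ (phiFI _ aFI); apply: phi_inj.
Qed.

Theorem theorem5 (K : fieldType) (P Q : poset) :
  FI_isomorphic K P Q -> poset_isomorphic P Q.
Proof.
move=> /FI_iso_pair_of [phi [psi iso]]; have iso' := iso_pair_sym iso.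
pose sigma x := proj1_sig (constructive_indefinite_description _ (corr_exists iso x)).
pose tau y := proj1_sig (constructive_indefinite_description _ (corr_exists iso' y)).
have sigmaP x : corr phi psi x (sigma x).
  exact: proj2_sig (constructive_indefinite_description _ (corr_exists iso x)).
have tauP y : corr phi psi (tau y) y.
  by have [? ?] := proj2_sig (constructive_indefinite_description _ (corr_exists iso' y)).
have corr_swap x y : corr phi psi x y -> corr psi phi y x by move=> [? ?].
exists sigma; split.
  exists tau => [x | y].
    by apply: (corr_unique iso'); apply: corr_swap; [exact: tauP | exact: sigmaP].
  by apply: (corr_unique iso); [exact: sigmaP | exact: tauP].
move=> x x'; split; first exact: (corr_le iso (sigmaP x) (sigmaP x')).
by apply: (corr_le iso'); apply: corr_swap; exact: sigmaP.
Qed.
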